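(* Let $g:\mathbb{R}\to\mathbb{R}$ be locally Lipschitz continuous with $g(0)=0$, $g(x)x>0$ for all $x\neq0$, $g_0:=\liminf_{|x|\to0}g(x)/x>0$, and $g$ bounded on $\mathbb{R}^-$. Let $\mathcal{G}(x)=\int_0^x g(\xi)\,d\xi$. For $\lambda>0$ consider the autonomous system $x'=y$, $y'=-\lambda g(x)$, and for $0<c<\min\{\mathcal{G}(-\infty),\mathcal{G}(+\infty)\}$ let $\tau(c)$ be the period of the closed orbit $\{\tfrac12 y^2+\lambda\mathcal{G}(x)=\lambda c\}$, i.e. $\tau(c)=\tau^+(c)+\tau^-(c)$ with $$\tau^+(c)=\sqrt{\tfrac{2}{\lambda}}\int_0^{x_+}\frac{d\xi}{\sqrt{c-\mathcal{G}(\xi)}},\qquad \tau^-(c)=\sqrt{\tfrac{2}{\lambda}}\int_{x_-}^0\frac{d\xi}{\sqrt{c-\mathcal{G}(\xi)}},$$ where $x_-<0<x_+$ satisfy $\mathcal{G}(x_-)=\mathcal{G}(x_+)=c$. Then, for each $\lambda>0$, the time-map $\tau$ is continuous and its range includes the interval $]2\pi/\sqrt{\lambda g_0},+\infty[$.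
   Context: $\mathcal{G}(\pm\infty)$ denote the limits (possibly $+\infty$) of $\mathcal{G}(x)$ as $x\to\pm\infty$, which exist since $\mathcal{G}$ is monotone on each half-line. *)

From Stdlib Require Import Reals.
From Coquelicot Require Import Coquelicot.
Open Scope R_scope.

Definition locally_lipschitz (g : R -> R) : Prop :=
  forall x : R, exists delta : R, exists L : R, 0 < delta /\
    forall y z : R, Rabs (y - x) < delta -> Rabs (z - x) < delta ->
      Rabs (g y - g z) <= L * Rabs (y - z).

Definition is_liminf_at0 (f : R -> R) (l : R) : Prop :=
  (forall eps : R, 0 < eps -> exists delta : R, 0 < delta /\
      forall x : R, 0 < Rabs x < delta -> l - eps < f x) /\
  (forall eps : R, 0 < eps -> forall delta : R, 0 < delta ->
      exists x : R, 0 < Rabs x < delta /\ f x < l + eps).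

Definition Gprim (g : R -> R) (x : R) : R := RInt g 0 x.

Definition admissible (g : R -> R) (c : R) : Prop :=
  0 < c /\ Rbar_lt (Finite c)
    (Rbar_min (Lim (Gprim g) m_infty) (Lim (Gprim g) p_infty)).

Definition integrand (g : R -> R) (c : R) (xi : R) : R :=
  1 / sqrt (c - Gprim g xi).

Definition tau_plus (g : R -> R) (lambda : R) (xp : R -> R) (c : R) : R :=
  sqrt (2 / lambda) * RInt_gen (integrand g c) (at_point 0) (at_left (xp c)).

Definition tau_minus (g : R -> R) (lambda : R) (xm : R -> R) (c : R) : R :=
  sqrt (2 / lambda) * RInt_gen (integrand g c) (at_right (xm c)) (at_point 0).

Definition tau (g : R -> R) (lambda : R) (xm xp : R -> R) (c : R) : R :=
  tau_plus g lambda xp c + tau_minus g lambda xm c.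

(* For a turning point a, the substitution xi = a (1 - s^2) turns
   int_0^a dxi / sqrt (G a - G xi) into the proper integral int_0^1 2 a / sqrt (a m(a,s)) ds,
   where m(a,s) is the mean of g over [a (1 - s^2), a], because
   G a - G (a (1 - s^2)) = s^2 a m(a,s).  The new integrand is positive and jointly continuous,
   so the half-periods depend continuously on the turning points, and these depend
   continuously on c because G is strictly monotone on each half-line.
   For small c the orbit stays where z g z >= k z^2 with k < g0; there the derivative of the
   Pruefer angle atan (al z / sqrt (c - G z)) / al, al = sqrt (k / 2), dominates the
   integrand, so tau c is at most the period 2 pi / sqrt (lambda k) of the linear oscillator.
   For c = min (G r) (G (-r)) one turning point is at distance r while c <= G (-r) <= M r,
   so tau c >= sqrt (2 / lambda) r / sqrt c grows like sqrt r.  The intermediate value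
   theorem fills the gap. *)

From Stdlib Require Import Reals Lra ClassicalEpsilon Ranalysis5.
From Coquelicot Require Import Coquelicot.
Open Scope R_scope.

Lemma continuous_of_locally_lipschitz (f : R -> R) x :
  locally_lipschitz f -> continuous f x.
Proof.
  intros Hlip. destruct (Hlip x) as [d [L [Hd HL]]].
  set (K := Rabs L + 1). assert (HK : 0 < K) by (pose proof (Rabs_pos L); unfold K; lra).
  apply filterlim_locally. intros eps.
  assert (Hde : 0 < Rmin d (eps / K))
    by (apply Rmin_pos; [lra | apply Rdiv_lt_0_compat; [apply cond_pos | lra]]).
  exists (mkposreal _ Hde). intros y Hy. change (Rabs (y - x) < Rmin d (eps / K)) in Hy.
  change (Rabs (f y - f x) < eps).
  pose proof (Rmin_l d (eps / K)). pose proof (Rmin_r d (eps / K)).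
  assert (Hf := HL y x ltac:(lra) ltac:(rewrite Rminus_diag, Rabs_R0; lra)).
  assert (Rabs (y - x) * K < eps).
  { replace (pos eps) with (eps / K * K) by (field; lra). apply Rmult_lt_compat_r; lra. }
  pose proof (Rle_abs L). pose proof (Rabs_pos (y - x)). unfold K in *. nra.
Qed.

Lemma joint_continuous_uniform {T : UniformSpace} (f : T -> R -> R) (a b : R) (p0 : T)
  (e : posreal) :
  (forall s, a <= s <= b -> continuous (fun q : T * R => f (fst q) (snd q)) (p0, s)) ->
  locally p0 (fun p => forall s, a <= s <= b -> Rabs (f p s - f p0 s) < e).
Proof.
  intros Hjoint.
  assert (Hgauge : forall t, exists d : posreal, a <= t <= b ->
            forall p s, ball p0 d p -> Rabs (s - t) < d -> Rabs (f p s - f p0 t) < e / 2).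
  { intros t. destruct (classic (a <= t <= b)) as [Ht|Ht].
    - assert (Hc := Hjoint t Ht). unfold continuous in Hc. rewrite filterlim_locally in Hc.
      destruct (Hc (mkposreal (e / 2) ltac:(pose proof (cond_pos e); lra))) as [d Hd].
      exists d. intros _ p s Hp Hs. exact (Hd (p, s) (conj Hp Hs)).
    - exists (mkposreal 1 Rlt_0_1). tauto. }
  destruct (choice _ Hgauge) as [delta Hdelta].
  destruct (compactness_value_1d a b delta) as [d Hd].
  exists d. intros p Hp s Hs. apply NNPP. intros Hn. apply (Hd s Hs).
  intros [t [Ht [Hst Hdt]]]. apply Hn.
  assert (H1 := Hdelta t Ht p s (ball_le _ _ _ Hdt _ Hp) Hst).
  assert (H2 := Hdelta t Ht p0 s (ball_center p0 (delta t)) Hst).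
  replace (f p s - f p0 s) with ((f p s - f p0 t) - (f p0 s - f p0 t)) by ring.
  eapply Rle_lt_trans; [apply Rabs_triang|]. rewrite Rabs_Ropp. lra.
Qed.

Lemma continuous_RInt_param {T : UniformSpace} (f : T -> R -> R) (a b : R) (p0 : T) :
  a <= b ->
  locally p0 (fun p => forall s, a <= s <= b ->
    continuous (fun q : T * R => f (fst q) (snd q)) (p, s)) ->
  continuous (fun p => RInt (f p) a b) p0.
Proof.
  intros Hab Hjoint.
  assert (Hex : forall p, (forall s, a <= s <= b ->
             continuous (fun q : T * R => f (fst q) (snd q)) (p, s)) -> ex_RInt (f p) a b).
  { intros p Hp. apply (ex_RInt_continuous (V := R_CompleteNormedModule)). intros s Hs.
    rewrite Rmin_left, Rmax_right in Hs by lra.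
    exact (continuous_comp_2 (fun _ => p) (fun s => s) f s
             (continuous_const p s) (continuous_id s) (Hp s Hs)). }
  apply filterlim_locally. intros eps.
  assert (He : 0 < eps / (2 * (b - a + 1))) by (apply Rdiv_lt_0_compat; [apply cond_pos | lra]).
  assert (H0 := locally_singleton _ _ Hjoint).
  generalize (filter_and _ _ Hjoint (joint_continuous_uniform f a b p0 (mkposreal _ He) H0)).
  apply filter_imp. intros p [Hp Hclose]. simpl in Hclose.
  change (Rabs (RInt (f p) a b - RInt (f p0) a b) < eps).
  rewrite <- (RInt_minus (V := R_CompleteNormedModule)) by auto.
  eapply Rle_lt_trans.
  - apply abs_RInt_le_const with (M := eps / (2 * (b - a + 1))); [lra | |].
    + now apply (ex_RInt_minus (V := R_NormedModule)); apply Hex.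
    + intros s Hs. now apply Rlt_le, Hclose.
  - apply (Rmult_lt_reg_r (2 * (b - a + 1))); [lra|].
    field_simplify; [|lra]. pose proof (cond_pos eps). nra.
Qed.

Lemma is_RInt_gen_at_point_l {F : (R -> Prop) -> Prop} {FF : Filter F}
  (f : R -> R) (c l : R) :
  F (fun b => ex_RInt f c b) -> filterlim (fun b => RInt f c b) F (locally l) ->
  is_RInt_gen f (at_point c) F l.
Proof.
  intros Hex Hlim P HP.
  apply Filter_prod with (fun x => x = c) (fun b => ex_RInt f c b /\ P (RInt f c b)).
  - reflexivity.
  - apply filter_and; [exact Hex | exact (Hlim P HP)].
  - intros x b -> [Hb HPb]. exists (RInt f c b).
    split; [exact (RInt_correct (V := R_CompleteNormedModule) f c b Hb) | exact HPb].
Qed.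

Lemma RInt_le_oriented (f h : R -> R) (x y : R) :
  ex_RInt f x y -> ex_RInt h x y ->
  (forall z, Rmin x y < z < Rmax x y -> f z <= h z) ->
  (y - x) * RInt f x y <= (y - x) * RInt h x y.
Proof.
  intros Ef Eh Hfh. destruct (Rle_lt_dec x y) as [Hxy|Hyx].
  - apply Rmult_le_compat_l; [lra|]. apply RInt_le; auto.
    intros z Hz. apply Hfh. rewrite Rmin_left, Rmax_right; lra.
  - apply ex_RInt_swap in Ef, Eh.
    rewrite <- (opp_RInt_swap (V := R_CompleteNormedModule) f y x Ef),
      <- (opp_RInt_swap (V := R_CompleteNormedModule) h y x Eh).
    assert (RInt f y x <= RInt h y x).
    { apply RInt_le; auto; [lra|].
      intros z Hz. apply Hfh. rewrite Rmin_right, Rmax_left; lra. }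
    change (opp ?u) with (- u). nra.
Qed.

Lemma continuous_le_right (h1 h2 : R -> R) (x e : R) : 0 < e ->
  continuous h1 x -> continuous h2 x ->
  (forall u, x < u < x + e -> h1 u <= h2 u) -> h1 x <= h2 x.
Proof.
  intros He H1 H2 Hle.
  apply (filterlim_le (F := at_right x) h1 h2 (h1 x) (h2 x)).
  - exists (mkposreal e He). intros u Hu Hxu. apply Hle.
    change (Rabs (u - x) < e) in Hu. apply Rabs_def2 in Hu. lra.
  - apply (filterlim_filter_le_1 (F := locally x)); [apply filter_le_within | exact H1].
  - apply (filterlim_filter_le_1 (F := locally x)); [apply filter_le_within | exact H2].
Qed.

Lemma continuous_incr_inverse (G x : R -> R) (c0 : R) :
  (forall y z, 0 < y -> y < z -> G y < G z) ->
  locally c0 (fun c => 0 < x c /\ G (x c) = c) ->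
  continuous x c0.
Proof.
  intros Hincr Hx.
  assert (Hrefl : forall y z, 0 < y -> 0 < z -> G y < G z -> y < z).
  { intros y z Hy Hz HG. destruct (Rlt_le_dec y z) as [|[Hzy | ->]]; [assumption | | lra].
    pose proof (Hincr z y Hz Hzy). lra. }
  destruct (locally_singleton _ _ Hx) as [Hx0 HG0].
  apply filterlim_locally. intros eps.
  set (e := Rmin eps (x c0) / 2).
  assert (He : 0 < e < eps /\ e < x c0).
  { pose proof (Rmin_l eps (x c0)). pose proof (Rmin_r eps (x c0)).
    pose proof (Rmin_pos eps (x c0) (cond_pos eps) Hx0). unfold e. lra. }
  assert (Hlo : G (x c0 - e) < c0) by (pose proof (Hincr (x c0 - e) (x c0)); lra).
  assert (Hhi : c0 < G (x c0 + e)) by (pose proof (Hincr (x c0) (x c0 + e)); lra).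
  assert (Hnear : locally c0 (fun c => G (x c0 - e) < c < G (x c0 + e))).
  { apply (locally_interval _ c0 (G (x c0 - e)) (G (x c0 + e))); [exact Hlo | exact Hhi |].
    intros c H1 H2. split; assumption. }
  generalize (filter_and _ _ Hx Hnear). apply filter_imp. intros c [[Hxc HGc] Hc].
  change (Rabs (x c - x c0) < eps). rewrite <- HGc in Hc.
  assert (x c0 - e < x c) by (apply Hrefl; lra).
  assert (x c < x c0 + e) by (apply Hrefl; lra).
  apply Rabs_def1; lra.
Qed.

Lemma IVT_between (f : R -> R) (a b y : R) :
  (forall c, Rmin a b <= c <= Rmax a b -> continuous f c) ->
  f a < y < f b -> exists c, Rmin a b <= c <= Rmax a b /\ f c = y.
Proof.
  intros Hf Hy.
  assert (Hf' : forall (s : R) c, Rmin a b <= c <= Rmax a b ->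
             continuity_pt (fun c => s * (f c - y)) c).
  { intros s c Hc. apply continuity_pt_filterlim.
    apply (continuous_scal_r s (fun c => f c - y)).
    apply (continuous_minus f (fun _ => y)); [now apply Hf | apply continuous_const]. }
  destruct (Rlt_le_dec a b) as [Hab|Hba].
  - rewrite Rmin_left, Rmax_right in * by lra.
    destruct (IVT_interv (fun c => 1 * (f c - y)) a b) as [c [Hc Ec]];
      [intros; now apply Hf'|lra|lra|lra|].
    exists c. split; [exact Hc | lra].
  - destruct Hba as [Hba|Heq]; [|subst; lra].
    rewrite Rmin_right, Rmax_left in * by lra.
    destruct (IVT_interv (fun c => -1 * (f c - y)) b a) as [c [Hc Ec]];
      [intros; now apply Hf'|lra|lra|lra|].
    exists c. split; [exact Hc | lra].
Qed.

Lemma div_sqrt_lt_iff (x y T : R) : 0 <= x -> 0 < y -> 0 < T ->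
  (x / sqrt y < T <-> x * x < T * T * y).
Proof.
  intros Hx Hy HT. pose proof (sqrt_lt_R0 y Hy) as Hs.
  pose proof (sqrt_sqrt y (Rlt_le _ _ Hy)) as Hss.
  remember (sqrt y) as s eqn:Es. clear Es. subst y.
  assert (Hi : s * / s = 1) by (field; lra).
  assert (Hpos : 0 < / s) by (apply Rinv_0_lt_compat; lra).
  assert (Hxs : x * / s < T <-> x < T * s).
  { split; intros Hlt.
    - replace x with (x * / s * s) by (field; lra). nra.
    - replace T with (T * s * / s) by (field; lra). nra. }
  unfold Rdiv. rewrite Hxs. assert (0 < T * s) by nra. split; intros Hlt.
  - nra.
  - destruct (Rlt_le_dec x (T * s)) as [|Hge]; [assumption|].
    assert (T * s * (T * s) <= x * x) by (apply Rmult_le_compat; lra). nra.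
Qed.

Lemma lt_div_sqrt (x y T : R) : 0 < x -> 0 < y -> T * T * y < x * x -> T < x / sqrt y.
Proof.
  intros Hx Hy HT. pose proof (sqrt_lt_R0 y Hy) as Hs.
  pose proof (sqrt_sqrt y (Rlt_le _ _ Hy)) as Hss.
  remember (sqrt y) as s eqn:Es. clear Es. subst y.
  assert (Hpos : 0 < / s) by (apply Rinv_0_lt_compat; lra).
  assert (Hlt : T * s < x).
  { destruct (Rlt_le_dec (T * s) x) as [|Hge]; [assumption|].
    assert (x * x <= T * s * (T * s)) by (apply Rmult_le_compat; lra). nra. }
  replace T with (T * s * / s) by (field; lra). unfold Rdiv. nra.
Qed.

Lemma Gprim_0 (g : R -> R) : Gprim g 0 = 0.
Proof. unfold Gprim. now rewrite RInt_point. Qed.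

Lemma Rdiv_unit_interval (x y : R) : 0 <= x < y \/ y < x <= 0 -> 0 <= x / y < 1.
Proof.
  intros Hxy. assert (Hy : y <> 0) by lra.
  assert (E : x = y * (x / y)) by (field; exact Hy).
  destruct Hxy; split; nra.
Qed.

Lemma segment_scale_incl (a t z : R) : 0 <= t <= 1 ->
  Rmin 0 (a * t) <= z <= Rmax 0 (a * t) -> Rmin 0 a <= z <= Rmax 0 a.
Proof.
  unfold Rmin, Rmax. destruct (Rle_dec 0 (a * t)), (Rle_dec 0 a); intros; split; nra.
Qed.

Lemma admissible_iff (g : R -> R) c : admissible g c <->
  0 < c /\ Rbar_lt c (Lim (Gprim g) m_infty) /\ Rbar_lt c (Lim (Gprim g) p_infty).
Proof.
  unfold admissible.
  destruct (Lim (Gprim g) m_infty) as [x| |], (Lim (Gprim g) p_infty) as [y| |];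
    simpl; try tauto.
  split; intros [H1 H2]; split; auto.
  - split; eapply Rlt_le_trans; eauto; [apply Rmin_l | apply Rmin_r].
  - now apply Rmin_glb_lt.
Qed.

Lemma admissible_locally (g : R -> R) c : admissible g c -> locally c (admissible g).
Proof.
  intros Hc. apply admissible_iff in Hc.
  assert (Hopen : open (fun c => 0 < c /\ Rbar_lt c (Lim (Gprim g) m_infty)
                                 /\ Rbar_lt c (Lim (Gprim g) p_infty))).
  { repeat apply open_and; [apply open_gt | apply open_Rbar_lt | apply open_Rbar_lt]. }
  generalize (Hopen c Hc). apply filter_imp. intros c' Hc'. now apply admissible_iff.
Qed.

Lemma admissible_between (g : R -> R) c1 c2 c : admissible g c1 -> admissible g c2 ->
  Rmin c1 c2 <= c <= Rmax c1 c2 -> admissible g c.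
Proof.
  rewrite !admissible_iff. intros [P1 [M1 Q1]] [P2 [M2 Q2]] Hc.
  assert (Hc0 : 0 < c) by (unfold Rmin in Hc; destruct Rle_dec; lra).
  assert (Hc12 : c <= c1 \/ c <= c2) by (unfold Rmax in Hc; destruct Rle_dec; lra).
  split; [exact Hc0|].
  destruct Hc12 as [H | H]; split;
    solve [apply Rbar_le_lt_trans with c1; assumption | apply Rbar_le_lt_trans with c2; assumption].
Qed.

(** * The potential G *)

Section Energy.

Variable g : R -> R.
Hypothesis g_cont : forall x, continuous g x.
Hypothesis g_sign : forall x, x <> 0 -> g x * x > 0.

Local Notation G := (Gprim g).

Lemma continuous_g_comp (h : R -> R) t : ex_derive h t -> continuous (fun t => g (h t)) t.
Proof.
  intros Hh. apply (continuous_comp h g); [|apply g_cont].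
  exact (ex_derive_continuous (V := R_NormedModule) h t Hh).
Qed.

Lemma ex_RInt_g a b : ex_RInt g a b.
Proof. apply (ex_RInt_continuous (V := R_CompleteNormedModule)). intros; apply g_cont. Qed.

Lemma G_derive x : is_derive G x (g x).
Proof.
  apply (is_derive_RInt g G 0 x); [|apply g_cont].
  apply filter_forall. intros b. apply (RInt_correct (V := R_CompleteNormedModule)), ex_RInt_g.
Qed.

Lemma G_sub x y : G y - G x = RInt g x y.
Proof.
  unfold Gprim. rewrite <- (RInt_Chasles g 0 x y) by apply ex_RInt_g.
  change (plus ?u ?v) with (u + v). ring.
Qed.

Definition gmean (a s : R) : R := RInt (fun t => g (a * (1 - s * s * t))) 0 1.

Lemma ex_RInt_gmean a s : ex_RInt (fun t => g (a * (1 - s * s * t))) 0 1.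
Proof.
  apply (ex_RInt_continuous (V := R_CompleteNormedModule)). intros t _.
  apply continuous_g_comp. auto_derive. trivial.
Qed.

Lemma G_sub_gmean a s : G a - G (a * (1 - s * s)) = s * s * (a * gmean a s).
Proof.
  set (u := - (a * (s * s))).
  assert (E := RInt_comp_lin g u a 0 1 (ex_RInt_g _ _)).
  replace (u * 0 + a) with a in E by ring.
  replace (u * 1 + a) with (a * (1 - s * s)) in E by (unfold u; ring).
  rewrite (RInt_ext (fun y => scal u (g (u * y + a))) (fun t => scal u (g (a * (1 - s * s * t)))))
    in E by (intros t _; unfold u; f_equal; f_equal; ring).
  rewrite (RInt_scal (V := R_CompleteNormedModule)) in E by apply ex_RInt_gmean.
  rewrite G_sub, <- (opp_RInt_swap (V := R_CompleteNormedModule) g a _ (ex_RInt_g _ _)).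
  change (scal u ?v) with (u * v) in E. change (opp ?v) with (- v).
  unfold gmean, u in *. lra.
Qed.

Lemma mul_g_scale_pos a t : a <> 0 -> 0 < t -> 0 < a * g (a * t).
Proof.
  intros Ha Ht. assert (H := g_sign (a * t) ltac:(nra)).
  replace (g (a * t) * (a * t)) with ((a * g (a * t)) * t) in H by ring. nra.
Qed.

Lemma gmean_pos a s : a <> 0 -> s * s <= 1 -> 0 < a * gmean a s.
Proof.
  intros Ha Hs. unfold gmean.
  rewrite <- (RInt_scal (V := R_CompleteNormedModule)) by apply ex_RInt_gmean.
  apply RInt_gt_0; [lra| |].
  - intros t Ht. apply mul_g_scale_pos; [exact Ha | nra].
  - intros t _. apply (continuous_scal_r a (fun t => g (a * (1 - s * s * t)))).
    apply continuous_g_comp. auto_derive. trivial.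
Qed.

Lemma G_scale_lt a t : a <> 0 -> 0 <= t < 1 -> G (a * t) < G a.
Proof.
  intros Ha Ht.
  assert (Hs : sqrt (1 - t) * sqrt (1 - t) = 1 - t) by (apply sqrt_sqrt; lra).
  assert (0 < sqrt (1 - t)) by (apply sqrt_lt_R0; lra).
  pose proof (G_sub_gmean a (sqrt (1 - t))) as E.
  rewrite Hs in E. replace (1 - (1 - t)) with t in E by ring.
  pose proof (gmean_pos a (sqrt (1 - t)) Ha ltac:(lra)). nra.
Qed.

Lemma G_lt_segment a t z : a <> 0 -> 0 <= t < 1 ->
  Rmin 0 (a * t) <= z <= Rmax 0 (a * t) -> G z < G a.
Proof.
  intros Ha Ht Hz.
  assert (Ez : z = a * (z / a)) by (field; exact Ha).
  remember (z / a) as r eqn:Er. clear Er. subst z.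
  apply G_scale_lt; [exact Ha|]. revert Hz. unfold Rmin, Rmax.
  destruct (Rle_dec 0 (a * t)), (Rlt_le_dec 0 a); intros; split; nra.
Qed.

Lemma G_incr x y : 0 <= x < y -> G x < G y.
Proof.
  intros Hxy. replace x with (y * (x / y)) at 1 by (field; lra).
  apply G_scale_lt; [lra|]. apply Rdiv_unit_interval. lra.
Qed.

Lemma G_decr x y : x < y <= 0 -> G y < G x.
Proof.
  intros Hxy. replace y with (x * (y / x)) at 1 by (field; lra).
  apply G_scale_lt; [lra|]. apply Rdiv_unit_interval. lra.
Qed.

Lemma G_pos x : x <> 0 -> 0 < G x.
Proof.
  intros Hx. rewrite <- (Gprim_0 g). replace 0 with (x * 0) by ring.
  apply G_scale_lt; lra.
Qed.

Lemma G_ge0 x : 0 <= G x.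
Proof. destruct (Req_dec x 0) as [->|Hx]; [rewrite Gprim_0; lra | now apply Rlt_le, G_pos]. Qed.

Lemma G_le_pos x y : 0 <= x -> 0 <= y -> G x <= G y -> x <= y.
Proof. intros Hx Hy HG. apply Rnot_lt_le. intros Hyx. pose proof (G_incr y x). lra. Qed.

Lemma G_le_neg x y : x <= 0 -> y <= 0 -> G x <= G y -> y <= x.
Proof. intros Hx Hy HG. apply Rnot_lt_le. intros Hxy. pose proof (G_decr x y). lra. Qed.

Lemma integrand_continuous c x : G x < c -> continuous (integrand g c) x.
Proof.
  intros Hx. apply (ex_derive_continuous (V := R_NormedModule)). unfold integrand.
  auto_derive. repeat split; [exists (g x); apply G_derive | lra |].
  apply Rgt_not_eq, sqrt_lt_R0. lra.
Qed.

Lemma G_lt_Lim_p x : 0 <= x -> Rbar_lt (G x) (Lim G p_infty).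
Proof.
  intros Hx. destruct (INR_unbounded x) as [N HN].
  apply Rbar_lt_le_trans with (G (INR N)); [simpl; apply G_incr; lra|].
  unfold Lim. rewrite <- (Lim_seq_const (G (INR N))).
  apply Lim_seq_le_loc. exists N. intros n Hn. simpl.
  apply le_INR in Hn. destruct Hn as [Hlt | ->]; [|lra].
  left. apply G_incr. lra.
Qed.

Lemma G_lt_Lim_m x : x <= 0 -> Rbar_lt (G x) (Lim G m_infty).
Proof.
  intros Hx. destruct (INR_unbounded (- x)) as [N HN].
  apply Rbar_lt_le_trans with (G (- INR N)); [simpl; apply G_decr; lra|].
  unfold Lim. rewrite <- (Lim_seq_const (G (- INR N))).
  apply Lim_seq_le_loc. exists N. intros n Hn. simpl.
  apply le_INR in Hn. destruct Hn as [Hlt | ->]; [|lra].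
  left. apply G_decr. pose proof (pos_INR N). lra.
Qed.

Lemma admissible_of_le x y c : x <= 0 <= y -> 0 < c -> c <= G x -> c <= G y -> admissible g c.
Proof.
  intros Hxy Hc Hx Hy. apply admissible_iff. split; [exact Hc|]. split.
  - apply Rbar_le_lt_trans with (G x); [exact Hx | apply G_lt_Lim_m; lra].
  - apply Rbar_le_lt_trans with (G y); [exact Hy | apply G_lt_Lim_p; lra].
Qed.

(* The largest energy whose orbit stays in [-r, r]; one of its turning points is -r or r. *)
Definition sym_level (r : R) : R := Rmin (G r) (G (- r)).

Lemma G_le_bound M x : (forall y, y <= 0 -> Rabs (g y) <= M) -> x <= 0 -> G x <= M * (- x).
Proof.
  intros HM Hx. rewrite <- (Rminus_0_r (G x)), <- (Gprim_0 g) at 1. rewrite G_sub.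
  rewrite <- (opp_RInt_swap (V := R_CompleteNormedModule)) by apply ex_RInt_g.
  change (opp ?u) with (- u).
  assert (B := abs_RInt_le_const g x 0 M Hx (ex_RInt_g x 0) (fun t Ht => HM t (proj2 Ht))).
  pose proof (Rle_abs (- RInt g x 0)). rewrite Rabs_Ropp in *. lra.
Qed.

(** * Desingularised half-periods *)

(* [transit a] is the oriented integral of 1 / sqrt (G a - G xi) for xi from 0 to a, written
   after the substitution xi = a (1 - s^2): by [G_sub_gmean] the Jacobian factor s cancels the
   zero of G a - G (a (1 - s^2)) at s = 0. *)
Definition kernel (a s : R) : R := 2 * a / sqrt (a * gmean a s).

Definition transit (a : R) : R := RInt (kernel a) 0 1.

Lemma gmean_continuous a s : continuous (fun p : R * R => gmean (fst p) (snd p)) (a, s).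
Proof.
  apply (continuous_RInt_param (fun p t => g (fst p * (1 - snd p * snd p * t))) 0 1 (a, s));
    [lra|].
  apply filter_forall. intros [a' s'] t _.
  apply (continuous_comp _ g); [|apply g_cont].
  set (q := ((a', s'), t)).
  assert (Ha : continuous (fun q : (R * R) * R => fst (fst q)) q)
    by exact (continuous_comp fst fst q (continuous_fst _ _) (continuous_fst _ _)).
  assert (Hs : continuous (fun q : (R * R) * R => snd (fst q)) q)
    by exact (continuous_comp fst snd q (continuous_fst _ _) (continuous_snd _ _)).
  assert (Ht : continuous (fun q : (R * R) * R => snd q) q) by apply continuous_snd.
  apply (continuous_mult (fun q : (R * R) * R => fst (fst q))); [exact Ha|].
  apply (continuous_minus (fun _ => 1)); [apply continuous_const|].
  repeat apply (continuous_mult (K := R_AbsRing)); assumption.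
Qed.

Lemma kernel_continuous a s : a <> 0 -> s * s <= 1 ->
  continuous (fun p : R * R => kernel (fst p) (snd p)) (a, s).
Proof.
  intros Ha Hs. unfold kernel, Rdiv.
  apply (continuous_mult (fun p : R * R => 2 * fst p)).
  - apply (continuous_mult (fun _ => 2)); [apply continuous_const | apply continuous_fst].
  - apply (continuous_comp (fun p : R * R => sqrt (fst p * gmean (fst p) (snd p))) Rinv).
    + apply (continuous_comp (fun p : R * R => fst p * gmean (fst p) (snd p)) sqrt);
        [|apply continuous_sqrt].
      apply (continuous_mult (fun p : R * R => fst p));
        [apply continuous_fst | apply gmean_continuous].
    + apply continuous_Rinv, Rgt_not_eq, sqrt_lt_R0, gmean_pos; assumption.
Qed.

Lemma kernel_continuous_r a s : a <> 0 -> s * s <= 1 -> continuous (kernel a) s.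
Proof.
  intros Ha Hs.
  apply (continuous_comp_2 (fun _ => a) (fun s => s) kernel s
           (continuous_const a s) (continuous_id s)).
  now apply kernel_continuous.
Qed.

Lemma transit_continuous a : a <> 0 -> continuous transit a.
Proof.
  intros Ha. apply (continuous_RInt_param kernel 0 1 a); [lra|].
  exists (mkposreal (Rabs a) (Rabs_pos_lt a Ha)). intros b Hb s Hs.
  apply kernel_continuous; [|nra].
  intros ->. change (Rabs (0 - a) < Rabs a) in Hb. rewrite Rminus_0_l, Rabs_Ropp in Hb. lra.
Qed.

Lemma kernel_tail_continuous a : a <> 0 -> continuous (fun u => RInt (kernel a) u 1) 0.
Proof.
  intros Ha.
  assert (Hex : forall u, -1 <= u <= 1 -> ex_RInt (kernel a) 1 u).
  { intros u Hu. apply (ex_RInt_continuous (V := R_CompleteNormedModule)). intros s Hs.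
    apply kernel_continuous_r; [exact Ha|].
    revert Hs. unfold Rmin, Rmax. destruct Rle_dec; intros; nra. }
  assert (Hnear : locally 0 (fun u => -1 <= u <= 1)).
  { exists (mkposreal 1 Rlt_0_1). intros u Hu. change (Rabs (u - 0) < 1) in Hu.
    apply Rabs_def2 in Hu. lra. }
  apply (continuous_ext_loc _ (fun u => - RInt (kernel a) 1 u)).
  - revert Hnear. apply filter_imp. intros u Hu.
    exact (opp_RInt_swap (V := R_CompleteNormedModule) _ _ _ (Hex u Hu)).
  - apply (continuous_opp (V := R_NormedModule) (fun u => RInt (kernel a) 1 u)).
    apply (continuous_RInt_1 (kernel a) 1 0).
    revert Hnear. apply filter_imp. intros u Hu.
    now apply (RInt_correct (V := R_CompleteNormedModule)), Hex.
Qed.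

Lemma kernel_eq_integrand a s : a <> 0 -> 0 < s <= 1 ->
  kernel a s = 2 * a * s * integrand g (G a) (a * (1 - s * s)).
Proof.
  intros Ha Hs. unfold kernel, integrand. rewrite G_sub_gmean.
  pose proof (gmean_pos a s Ha ltac:(nra)).
  rewrite (sqrt_mult_alt (s * s)), sqrt_square by nra.
  field. split; [apply Rgt_not_eq, sqrt_lt_R0; lra | lra].
Qed.

Lemma RInt_kernel_tail a u : a <> 0 -> 0 < u <= 1 ->
  RInt (kernel a) u 1 = RInt (integrand g (G a)) 0 (a * (1 - u * u)).
Proof.
  intros Ha Hu. set (f := integrand g (G a)).
  assert (Hcomp := is_RInt_comp f (fun s => a * (1 - s * s)) (fun s => - 2 * a * s) u 1).
  rewrite Rmin_left, Rmax_right in Hcomp by lra.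
  replace (a * (1 - 1 * 1)) with 0 in Hcomp by ring.
  assert (Hfc : forall s, u <= s <= 1 -> continuous f (a * (1 - s * s))).
  { intros s Hs. apply integrand_continuous, (G_lt_segment a (1 - s * s)); [exact Ha | nra |].
    unfold Rmin, Rmax. destruct Rle_dec; lra. }
  assert (Hsub : forall s, u <= s <= 1 -> is_derive (fun s => a * (1 - s * s)) s (- 2 * a * s)
                  /\ continuous (fun s => - 2 * a * s) s).
  { intros s Hs. split; [auto_derive; [trivial | ring] |].
    apply (ex_derive_continuous (V := R_NormedModule)). auto_derive. trivial. }
  specialize (Hcomp Hfc Hsub).
  assert (Hf : ex_RInt f 0 (a * (1 - u * u))).
  { apply (ex_RInt_continuous (V := R_CompleteNormedModule)). intros z Hz.
    apply integrand_continuous, (G_lt_segment a (1 - u * u)); [exact Ha | nra | exact Hz]. }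
  rewrite <- (opp_RInt_swap (V := R_CompleteNormedModule) f _ _ (ex_RInt_swap _ _ _ Hf)).
  rewrite <- (is_RInt_unique _ _ _ _ Hcomp).
  rewrite <- (RInt_opp (V := R_CompleteNormedModule)).
  - apply RInt_ext. rewrite Rmin_left, Rmax_right by lra. intros s Hs.
    rewrite kernel_eq_integrand by (auto; lra). change (scal ?x ?y) with (x * y).
    change (opp ?x) with (- x). unfold f.
    match goal with |- ?A = ?B => change (@eq R A B) end. ring.
  - eexists. exact Hcomp.
Qed.

(* [0 <= b / a < 1] says that b lies between 0 and a, with b <> a. *)
Lemma is_RInt_gen_transit a {F : (R -> Prop) -> Prop} {FF : Filter F} :
  a <> 0 -> filter_le F (locally a) -> F (fun b => 0 <= b / a < 1) ->
  is_RInt_gen (integrand g (G a)) (at_point 0) F (transit a).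
Proof.
  intros Ha Hle Hratio. apply is_RInt_gen_at_point_l.
  - revert Hratio. apply filter_imp. intros b Hb.
    apply (ex_RInt_continuous (V := R_CompleteNormedModule)). intros z Hz.
    apply integrand_continuous, (G_lt_segment a (b / a)); [exact Ha | exact Hb |].
    replace (a * (b / a)) with b by (field; exact Ha). exact Hz.
  - set (sigma := fun b => sqrt (1 - b / a)).
    apply (filterlim_ext_loc (fun b => RInt (kernel a) (sigma b) 1)).
    + revert Hratio. apply filter_imp. intros b Hb.
      assert (Hs : sigma b * sigma b = 1 - b / a) by (apply sqrt_sqrt; lra).
      assert (Hs1 : sigma b <= 1) by (rewrite <- sqrt_1; apply sqrt_le_1_alt; lra).
      rewrite RInt_kernel_tail by first [exact Ha | split; [apply sqrt_lt_R0; lra | exact Hs1]].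
      rewrite Hs. f_equal. field. exact Ha.
    + apply (filterlim_comp _ _ _ sigma (fun u => RInt (kernel a) u 1) F (locally 0)).
      * apply (filterlim_filter_le_1 _ Hle).
        assert (Hc : continuous sigma a).
        { apply continuous_sqrt_comp, (ex_derive_continuous (V := R_NormedModule)).
          auto_derive. trivial. }
        unfold continuous in Hc. replace (sigma a) with 0 in Hc; [exact Hc|].
        unfold sigma. replace (1 - a / a) with 0 by (field; exact Ha). now rewrite sqrt_0.
      * exact (kernel_tail_continuous a Ha).
Qed.

Lemma is_RInt_gen_transit_left a : 0 < a ->
  is_RInt_gen (integrand g (G a)) (at_point 0) (at_left a) (transit a).
Proof.
  intros Ha.
  apply (@is_RInt_gen_transit a (at_left a) _); [now apply Rgt_not_eq | apply filter_le_within |].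
  apply (locally_interval _ a 0 p_infty); [exact Ha | exact I |].
  intros b Hb _ Hba. apply Rdiv_unit_interval. simpl in Hb. lra.
Qed.

Lemma is_RInt_gen_transit_right a : a < 0 ->
  is_RInt_gen (integrand g (G a)) (at_right a) (at_point 0) (- transit a).
Proof.
  intros Ha.
  apply (is_RInt_gen_swap (V := R_NormedModule) (Fa := at_right a) (Fb := at_point 0)
           _ (transit a)).
  apply (@is_RInt_gen_transit a (at_right a) _); [now apply Rlt_not_eq | apply filter_le_within |].
  apply (locally_interval _ a m_infty 0); [exact I | exact Ha |].
  intros b _ Hb Hab. apply Rdiv_unit_interval. simpl in Hb. lra.
Qed.

Lemma RInt_integrand_ge c b : (forall z, Rmin 0 b <= z <= Rmax 0 b -> G z < c) ->
  b * b / sqrt c <= b * RInt (integrand g c) 0 b.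
Proof.
  intros Hseg.
  assert (Hc : 0 < c).
  { rewrite <- (Gprim_0 g). apply Hseg. unfold Rmin, Rmax. destruct Rle_dec; lra. }
  assert (H := RInt_le_oriented (fun _ => / sqrt c) (integrand g c) 0 b).
  rewrite RInt_const, Rminus_0_r in H. change (scal b (/ sqrt c)) with (b * / sqrt c) in H.
  unfold Rdiv. replace (b * b * / sqrt c) with (b * (b * / sqrt c)) by ring.
  apply H.
  - apply ex_RInt_const.
  - apply (ex_RInt_continuous (V := R_CompleteNormedModule)). intros z Hz.
    now apply integrand_continuous, Hseg.
  - intros z Hz. unfold integrand, Rdiv. rewrite Rmult_1_l.
    assert (Hz' : G z < c) by (apply Hseg; lra).
    apply Rinv_le_contravar; [apply sqrt_lt_R0; lra|].
    apply sqrt_le_1_alt. pose proof (G_ge0 z). lra.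
Qed.

(** * Pruefer comparison *)

(* A Pruefer-type angle on the energy level c: it stays below pi / (2 al), and its derivative
   [prufer'] dominates [integrand g c] wherever z g z >= 2 al^2 z^2. *)
Definition prufer (c al z : R) : R := atan (al * z / sqrt (c - G z)) / al.

Definition prufer' (c al z : R) : R :=
  (2 * (c - G z) + z * g z) / (2 * sqrt (c - G z) * (c - G z + al * al * (z * z))).

Lemma prufer_derive c al z : 0 < al -> G z < c -> is_derive (prufer c al) z (prufer' c al z).
Proof.
  intros Hal Hz. unfold prufer, prufer'.
  assert (Hw : 0 < sqrt (c - G z)) by (apply sqrt_lt_R0; lra).
  assert (Hww : sqrt (c - G z) * sqrt (c - G z) = c - G z) by (apply sqrt_sqrt; lra).
  auto_derive.
  - split; [exists (g z); apply G_derive|].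
    repeat split; try lra. apply Rgt_not_eq, sqrt_lt_R0. lra.
  - replace (Derive (fun x => G x) z) with (g z)
      by (symmetry; apply is_derive_unique, G_derive).
    replace (c + - G z) with (c - G z) by ring.
    set (w := sqrt (c - G z)) in *. rewrite <- Hww.
    assert (0 <= al * z / w * (al * z / w)) by nra.
    field. repeat split; nra.
Qed.

Lemma prufer'_continuous c al z : G z < c -> continuous (prufer' c al) z.
Proof.
  intros Hz. unfold prufer', Rdiv.
  assert (Hw : 0 < sqrt (c - G z)) by (apply sqrt_lt_R0; lra).
  apply (continuous_mult (fun z => 2 * (c - G z) + z * g z)).
  - apply (continuous_plus (fun z => 2 * (c - G z))).
    + apply (ex_derive_continuous (V := R_NormedModule)). auto_derive. exists (g z). apply G_derive.
    + apply (continuous_mult (fun z : R => z)); [apply continuous_id | apply g_cont].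
  - apply continuous_Rinv_comp.
    + apply (ex_derive_continuous (V := R_NormedModule)). auto_derive.
      repeat split; [exists (g z); apply G_derive | lra | exists (g z); apply G_derive].
    + assert (0 <= al * al * (z * z)) by (apply Rmult_le_pos; nra).
      apply Rgt_not_eq, Rmult_lt_0_compat; lra.
Qed.

Lemma integrand_le_prufer' c al z : G z < c -> 2 * (al * al) * (z * z) <= z * g z ->
  integrand g c z <= prufer' c al z.
Proof.
  intros Hz Hk. unfold integrand, prufer'.
  assert (Hw : 0 < sqrt (c - G z)) by (apply sqrt_lt_R0; lra).
  pose proof (sqrt_sqrt (c - G z) ltac:(lra)) as Hww.
  set (w := sqrt (c - G z)) in *. rewrite <- Hww.
  assert (Hd : 0 < w * w + al * al * (z * z)) by nra.
  apply (Rmult_le_reg_r (2 * w * (w * w + al * al * (z * z)))); [nra|].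
  replace (1 / w * (2 * w * (w * w + al * al * (z * z))))
    with (2 * (w * w + al * al * (z * z))) by (field; lra).
  replace ((2 * (w * w) + z * g z) / (2 * w * (w * w + al * al * (z * z)))
    * (2 * w * (w * w + al * al * (z * z)))) with (2 * (w * w) + z * g z) by (field; lra).
  lra.
Qed.

Lemma RInt_prufer' c al b : 0 < al -> (forall z, Rmin 0 b <= z <= Rmax 0 b -> G z < c) ->
  RInt (prufer' c al) 0 b = prufer c al b.
Proof.
  intros Hal Hseg. apply is_RInt_unique.
  replace (prufer c al b) with (minus (prufer c al b) (prufer c al 0)).
  - apply (is_RInt_derive (V := R_CompleteNormedModule)); intros z Hz.
    + apply prufer_derive; [exact Hal | apply Hseg, Hz].
    + apply prufer'_continuous, Hseg, Hz.
  - unfold prufer. rewrite Rmult_0_r, Rdiv_0_l, atan_0, Rdiv_0_l.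
    change (minus ?u 0) with (u - 0). apply Rminus_0_r.
Qed.

Lemma mul_prufer_le c al b : 0 < al -> b * prufer c al b <= Rabs b * (PI / (2 * al)).
Proof.
  intros Hal. unfold prufer.
  destruct (atan_bound (al * b / sqrt (c - G b))) as [Hlo Hhi].
  set (t := atan (al * b / sqrt (c - G b))) in *.
  replace (b * (t / al)) with (b * t / al) by (field; lra).
  replace (Rabs b * (PI / (2 * al))) with (Rabs b * (PI / 2) / al) by (field; lra).
  apply Rmult_le_compat_r; [left; apply Rinv_0_lt_compat, Hal|].
  destruct (Rle_lt_dec 0 b); [rewrite Rabs_pos_eq | rewrite Rabs_left]; nra.
Qed.

Lemma RInt_integrand_le_prufer c k b : 0 < k ->
  (forall z, Rmin 0 b <= z <= Rmax 0 b -> G z < c /\ k * (z * z) <= z * g z) ->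
  b * RInt (integrand g c) 0 b <= Rabs b * (PI / sqrt (2 * k)).
Proof.
  intros Hk Hseg. set (al := sqrt (k / 2)).
  assert (Hal : 0 < al) by (apply sqrt_lt_R0; lra).
  assert (Hal2 : al * al = k / 2) by (apply sqrt_sqrt; lra).
  replace (sqrt (2 * k)) with (2 * al).
  2: { replace (2 * k) with ((2 * al) * (2 * al)) by nra. rewrite sqrt_square; lra. }
  eapply Rle_trans; [|apply (mul_prufer_le c al b Hal)].
  rewrite <- RInt_prufer' by first [exact Hal | intros z Hz; apply Hseg, Hz].
  assert (H := RInt_le_oriented (integrand g c) (prufer' c al) 0 b).
  rewrite Rminus_0_r in H. apply H.
  - apply (ex_RInt_continuous (V := R_CompleteNormedModule)). intros z Hz.
    apply integrand_continuous, Hseg, Hz.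
  - apply (ex_RInt_continuous (V := R_CompleteNormedModule)). intros z Hz.
    apply prufer'_continuous, Hseg, Hz.
  - intros z Hz. destruct (Hseg z ltac:(lra)) as [Hzc Hzk].
    apply integrand_le_prufer'; [exact Hzc | rewrite Hal2; lra].
Qed.

Lemma transit_ge a : a <> 0 -> a * a / sqrt (G a) <= a * transit a.
Proof.
  intros Ha. pose proof (G_pos a Ha) as HGa.
  enough (H : a * a * (1 - 0 * 0) / sqrt (G a) <= a * RInt (kernel a) 0 1)
    by (rewrite Rmult_0_l, Rminus_0_r, Rmult_1_r in H; exact H).
  apply (continuous_le_right (fun u => a * a * (1 - u * u) / sqrt (G a))
           (fun u => a * RInt (kernel a) u 1) 0 1 Rlt_0_1).
  - apply (ex_derive_continuous (V := R_NormedModule)). auto_derive. trivial.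
  - apply (continuous_scal_r a (fun u => RInt (kernel a) u 1)), kernel_tail_continuous, Ha.
  - intros u Hu. rewrite RInt_kernel_tail by first [exact Ha | lra].
    assert (Ht : 0 < 1 - u * u < 1) by nra.
    assert (H := RInt_integrand_ge (G a) (a * (1 - u * u))
                   (fun z Hz => G_lt_segment a (1 - u * u) z Ha ltac:(lra) Hz)).
    unfold Rdiv in *. nra.
Qed.

Lemma transit_le a k : a <> 0 -> 0 < k ->
  (forall z, Rmin 0 a <= z <= Rmax 0 a -> k * (z * z) <= z * g z) ->
  a * transit a <= Rabs a * (PI / sqrt (2 * k)).
Proof.
  intros Ha Hk Hseg.
  apply (continuous_le_right (fun u => a * RInt (kernel a) u 1)
           (fun _ => Rabs a * (PI / sqrt (2 * k))) 0 1 Rlt_0_1).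
  - apply (continuous_scal_r a (fun u => RInt (kernel a) u 1)), kernel_tail_continuous, Ha.
  - apply continuous_const.
  - intros u Hu. rewrite RInt_kernel_tail by first [exact Ha | lra].
    assert (Ht : 0 < 1 - u * u < 1) by nra.
    assert (H := RInt_integrand_le_prufer (G a) k (a * (1 - u * u)) Hk).
    rewrite Rabs_mult, (Rabs_pos_eq (1 - u * u)) in H by lra.
    cut (a * (1 - u * u) * RInt (integrand g (G a)) 0 (a * (1 - u * u))
           <= Rabs a * (1 - u * u) * (PI / sqrt (2 * k))); [intros; nra|].
    apply H. intros z Hz. split.
    + exact (G_lt_segment a (1 - u * u) z Ha ltac:(lra) Hz).
    + apply Hseg, (segment_scale_incl a (1 - u * u)); [lra | exact Hz].
Qed.

(** * The time map *)

Section TimeMap.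

Variables (lambda : R) (xm xp : R -> R).
Hypothesis lambda_pos : 0 < lambda.
Hypothesis xp_spec : forall c, admissible g c -> 0 < xp c /\ G (xp c) = c.
Hypothesis xm_spec : forall c, admissible g c -> xm c < 0 /\ G (xm c) = c.

Local Notation time_map := (tau g lambda xm xp).

Lemma is_RInt_gen_tau_plus c : admissible g c ->
  is_RInt_gen (integrand g c) (at_point 0) (at_left (xp c)) (transit (xp c)).
Proof.
  intros Hc. destruct (xp_spec c Hc) as [Hpos HG].
  replace (integrand g c) with (integrand g (G (xp c))) by now rewrite HG.
  now apply is_RInt_gen_transit_left.
Qed.

Lemma is_RInt_gen_tau_minus c : admissible g c ->
  is_RInt_gen (integrand g c) (at_right (xm c)) (at_point 0) (- transit (xm c)).
Proof.
  intros Hc. destruct (xm_spec c Hc) as [Hneg HG].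
  replace (integrand g c) with (integrand g (G (xm c))) by now rewrite HG.
  now apply is_RInt_gen_transit_right.
Qed.

Lemma tau_eq c : admissible g c ->
  time_map c = sqrt (2 / lambda) * (transit (xp c) - transit (xm c)).
Proof.
  intros Hc. unfold tau, tau_plus, tau_minus.
  rewrite (is_RInt_gen_unique (V := R_CompleteNormedModule) _ _ (is_RInt_gen_tau_plus c Hc)),
    (is_RInt_gen_unique (V := R_CompleteNormedModule) _ _ (is_RInt_gen_tau_minus c Hc)).
  ring.
Qed.

Lemma xp_continuous c : admissible g c -> continuous xp c.
Proof.
  intros Hc. apply (continuous_incr_inverse G); [intros; apply G_incr; lra|].
  generalize (admissible_locally g c Hc). apply filter_imp. exact xp_spec.
Qed.

Lemma xm_continuous c : admissible g c -> continuous xm c.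
Proof.
  intros Hc. apply (continuous_ext (fun c => - - xm c) xm); [intros; apply Ropp_involutive|].
  apply (continuous_opp (V := R_NormedModule) (fun c => - xm c)).
  apply (continuous_incr_inverse (fun y => G (- y))); [intros; apply G_decr; lra|].
  generalize (admissible_locally g c Hc). apply filter_imp. intros c' Hc'.
  rewrite Ropp_involutive. destruct (xm_spec c' Hc'). split; [lra | assumption].
Qed.

Lemma tau_continuous c : admissible g c -> continuous time_map c.
Proof.
  intros Hc. destruct (xp_spec c Hc) as [Hp _], (xm_spec c Hc) as [Hm _].
  apply (continuous_ext_loc _ (fun c => sqrt (2 / lambda) * (transit (xp c) - transit (xm c)))).
  - generalize (admissible_locally g c Hc). apply filter_imp. intros c' Hc'.
    symmetry. now apply tau_eq.
  - apply (continuous_scal_r (sqrt (2 / lambda)) (fun c => transit (xp c) - transit (xm c))).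
    apply (continuous_minus (fun c => transit (xp c)) (fun c => transit (xm c))).
    + apply (continuous_comp xp transit); [now apply xp_continuous | apply transit_continuous; lra].
    + apply (continuous_comp xm transit); [now apply xm_continuous | apply transit_continuous; lra].
Qed.

Lemma tau_ge c : admissible g c ->
  sqrt (2 / lambda) * (xp c - xm c) / sqrt c <= time_map c.
Proof.
  intros Hc. rewrite tau_eq by exact Hc.
  destruct (xp_spec c Hc) as [Hp Ep], (xm_spec c Hc) as [Hm Em].
  pose proof (transit_ge (xp c) ltac:(lra)) as Lp.
  pose proof (transit_ge (xm c) ltac:(lra)) as Lm.
  rewrite Ep in Lp. rewrite Em in Lm.
  assert (Hs : 0 < sqrt (2 / lambda)) by (apply sqrt_lt_R0, Rdiv_lt_0_compat; lra).
  assert (Hsc : 0 < / sqrt c).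
  { apply Rinv_0_lt_compat, sqrt_lt_R0. apply admissible_iff in Hc. tauto. }
  unfold Rdiv in *.
  assert (xp c * / sqrt c <= transit (xp c)) by nra.
  assert (- xm c * / sqrt c <= - transit (xm c)) by nra.
  nra.
Qed.

Lemma tau_le c k : admissible g c -> 0 < k ->
  (forall z, xm c <= z <= xp c -> k * (z * z) <= z * g z) ->
  time_map c <= 2 * PI / sqrt (lambda * k).
Proof.
  intros Hc Hk Hz. rewrite tau_eq by exact Hc.
  destruct (xp_spec c Hc) as [Hp _], (xm_spec c Hc) as [Hm _].
  set (B := PI / sqrt (2 * k)).
  assert (Up : xp c * transit (xp c) <= Rabs (xp c) * B).
  { apply transit_le; [lra | exact Hk|]. intros z.
    rewrite Rmin_left, Rmax_right by lra. intros; apply Hz; lra. }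
  assert (Um : xm c * transit (xm c) <= Rabs (xm c) * B).
  { apply transit_le; [lra | exact Hk|]. intros z.
    rewrite Rmin_right, Rmax_left by lra. intros; apply Hz; lra. }
  rewrite Rabs_pos_eq in Up by lra. rewrite Rabs_left in Um by lra.
  assert (Hs : 0 < sqrt (2 / lambda)) by (apply sqrt_lt_R0, Rdiv_lt_0_compat; lra).
  assert (Hlk : 0 < sqrt (lambda * k)) by (apply sqrt_lt_R0; nra).
  assert (E : sqrt (2 / lambda) * sqrt (lambda * k) = sqrt (2 * k)).
  { rewrite <- sqrt_mult_alt by (apply Rlt_le, Rdiv_lt_0_compat; lra). f_equal. field. lra. }
  replace (2 * PI / sqrt (lambda * k)) with (sqrt (2 / lambda) * (2 * B))
    by (unfold B; rewrite <- E; field; lra).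
  assert (transit (xp c) <= B) by nra.
  assert (- transit (xm c) <= B) by nra.
  apply Rmult_le_compat_l; lra.
Qed.

Lemma sym_level_admissible r : 0 < r -> admissible g (sym_level r).
Proof.
  intros Hr. apply (admissible_of_le (- r) r); [lra | | apply Rmin_r | apply Rmin_l].
  apply Rmin_pos; apply G_pos; lra.
Qed.

Lemma sym_level_turning r : 0 < r ->
  - r <= xm (sym_level r) /\ xp (sym_level r) <= r /\ r <= xp (sym_level r) - xm (sym_level r).
Proof.
  intros Hr. set (c := sym_level r).
  destruct (xp_spec c (sym_level_admissible r Hr)) as [Hp Ep],
    (xm_spec c (sym_level_admissible r Hr)) as [Hm Em].
  assert (- r <= xm c) by (apply G_le_neg; [lra | lra | rewrite Em; apply Rmin_r]).
  assert (xp c <= r) by (apply G_le_pos; [lra | lra | rewrite Ep; apply Rmin_l]).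
  split; [|split]; try assumption.
  destruct (Rle_lt_dec (G r) (G (- r))).
  - assert (c = G r) by (apply Rmin_left; lra).
    assert (r <= xp c) by (apply G_le_pos; lra). lra.
  - assert (c = G (- r)) by (apply Rmin_right; lra).
    assert (xm c <= - r) by (apply G_le_neg; lra). lra.
Qed.

Lemma tau_lt_at_small_energy g0 T : is_liminf_at0 (fun x => g x / x) g0 -> 0 < g0 ->
  2 * PI / sqrt (lambda * g0) < T -> exists c, admissible g c /\ time_map c < T.
Proof.
  intros [Hinf _] Hg0 HT. pose proof PI_RGT_0 as HPI.
  assert (HT0 : 0 < T).
  { eapply Rlt_trans; [|exact HT]. apply Rdiv_lt_0_compat; [lra | apply sqrt_lt_R0; nra]. }
  apply div_sqrt_lt_iff in HT; [|lra | nra | exact HT0].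
  set (q := 2 * PI * (2 * PI) / (T * T * lambda)).
  assert (Hq : 0 < q < g0).
  { unfold q. split; [apply Rdiv_lt_0_compat; nra|].
    apply (Rmult_lt_reg_r (T * T * lambda)); [nra|]. field_simplify; nra. }
  set (k := (q + g0) / 2).
  assert (Hk : 2 * PI * (2 * PI) < T * T * (lambda * k)).
  { replace (2 * PI * (2 * PI)) with (T * T * (lambda * q)) by (unfold q; field; nra).
    apply Rmult_lt_compat_l; [nra|]. unfold k. nra. }
  destruct (Hinf (g0 - k) ltac:(unfold k; lra)) as [d [Hd Hnear]].
  assert (Hkz : forall z, Rabs z < d -> k * (z * z) <= z * g z).
  { intros z Hz. destruct (Req_dec z 0) as [->|Hz0]; [lra|].
    assert (Hgz := Hnear z (conj (Rabs_pos_lt z Hz0) Hz)).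
    replace (z * g z) with (g z / z * (z * z)) by (field; exact Hz0). nra. }
  exists (sym_level (d / 2)). split; [apply sym_level_admissible; lra|].
  destruct (sym_level_turning (d / 2)) as [Hm [Hp _]]; [lra|].
  eapply Rle_lt_trans.
  - apply (tau_le _ k); [apply sym_level_admissible; lra | unfold k; lra |].
    intros z Hz. apply Hkz, Rabs_def1; lra.
  - apply div_sqrt_lt_iff; [lra | unfold k; nra | exact HT0 | exact Hk].
Qed.

Lemma tau_gt_at_large_energy M T : (forall x, x <= 0 -> Rabs (g x) <= M) ->
  exists c, admissible g c /\ T < time_map c.
Proof.
  intros HM.
  assert (HM0 : 0 <= M) by (pose proof (HM 0 (Rle_refl 0)); pose proof (Rabs_pos (g 0)); lra).
  set (r := lambda * (M + 1) * (T * T) / 2 + 1).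
  assert (Hr : 1 <= r).
  { assert (0 <= lambda * (M + 1) * (T * T)) by (apply Rmult_le_pos; nra). unfold r. lra. }
  set (c := sym_level r).
  assert (Hc : admissible g c) by (apply sym_level_admissible; lra).
  exists c. split; [exact Hc|].
  destruct (sym_level_turning r) as [_ [_ Hspread]]; [lra|]. fold c in Hspread.
  assert (Hcr : c <= (M + 1) * r).
  { apply Rle_trans with (G (- r)); [apply Rmin_r|].
    pose proof (G_le_bound M (- r) HM ltac:(lra)). nra. }
  eapply Rlt_le_trans; [|apply tau_ge; exact Hc].
  assert (H2 : sqrt (2 / lambda) * sqrt (2 / lambda) = 2 / lambda)
    by (apply sqrt_sqrt, Rlt_le, Rdiv_lt_0_compat; lra).
  assert (Hs : 0 < sqrt (2 / lambda)) by (apply sqrt_lt_R0, Rdiv_lt_0_compat; lra).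
  assert (Hr2 : T * T * ((M + 1) * r) < 2 / lambda * (r * r)).
  { apply (Rmult_lt_reg_l (lambda / r)); [apply Rdiv_lt_0_compat; lra|].
    field_simplify; [|lra|lra]. unfold r. lra. }
  apply lt_div_sqrt; [nra | apply admissible_iff in Hc; tauto |].
  replace (sqrt (2 / lambda) * (xp c - xm c) * (sqrt (2 / lambda) * (xp c - xm c)))
    with (sqrt (2 / lambda) * sqrt (2 / lambda) * ((xp c - xm c) * (xp c - xm c))) by ring.
  rewrite H2.
  apply Rle_lt_trans with (T * T * ((M + 1) * r)); [apply Rmult_le_compat_l; nra|].
  eapply Rlt_le_trans; [exact Hr2|].
  apply Rmult_le_compat_l; [apply Rlt_le, Rdiv_lt_0_compat; lra|].
  apply Rmult_le_compat; lra.
Qed.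

Lemma tau_IVT c1 c2 T : admissible g c1 -> admissible g c2 ->
  time_map c1 < T < time_map c2 -> exists c, admissible g c /\ time_map c = T.
Proof.
  intros H1 H2 HT. destruct (IVT_between time_map c1 c2 T) as [c [Hc Ec]].
  - intros c Hc. apply tau_continuous, (admissible_between g c1 c2); assumption.
  - exact HT.
  - exists c. split; [apply (admissible_between g c1 c2) |]; assumption.
Qed.

End TimeMap.

End Energy.

Theorem proposition3p1
  (g : R -> R) (g0 lambda : R) (xm xp : R -> R)
  (Hlip : locally_lipschitz g)
  (Hg00 : g 0 = 0)
  (Hsign : forall x : R, x <> 0 -> g x * x > 0)
  (Hg0 : is_liminf_at0 (fun x => g x / x) g0)
  (Hg0pos : 0 < g0)
  (Hbdd : exists M : R, forall x : R, x <= 0 -> Rabs (g x) <= M)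
  (Hlam : 0 < lambda)
  (Hxp : forall c : R, admissible g c -> 0 < xp c /\ Gprim g (xp c) = c)
  (Hxm : forall c : R, admissible g c -> xm c < 0 /\ Gprim g (xm c) = c) :
  (forall c : R, admissible g c ->
     ex_RInt_gen (integrand g c) (at_point 0) (at_left (xp c)) /\
     ex_RInt_gen (integrand g c) (at_right (xm c)) (at_point 0)) /\
  (forall c : R, admissible g c -> continuous (tau g lambda xm xp) c) /\
  (forall T : R, 2 * PI / sqrt (lambda * g0) < T ->
     exists c : R, admissible g c /\ tau g lambda xm xp c = T).
Proof.
  assert (Hcont : forall x, continuous g x)
    by (intros x; now apply continuous_of_locally_lipschitz).
  split; [|split].
  - intros c Hc. split; eexists.
    + eapply is_RInt_gen_tau_plus; eassumption.
    + eapply is_RInt_gen_tau_minus; eassumption.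
  - intros c Hc. eapply tau_continuous; eassumption.
  - intros T HT. destruct Hbdd as [M HM].
    destruct (tau_lt_at_small_energy g Hcont Hsign lambda xm xp Hlam Hxp Hxm g0 T Hg0 Hg0pos HT)
      as [c1 [Hc1 HT1]].
    destruct (tau_gt_at_large_energy g Hcont Hsign lambda xm xp Hlam Hxp Hxm M T HM)
      as [c2 [Hc2 HT2]].
    exact (tau_IVT g Hcont Hsign lambda xm xp Hxp Hxm c1 c2 T Hc1 Hc2 (conj HT1 HT2)).
Qed.
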